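(* Let $X_1,\dots,X_n$ be independent with $X_i\sim\mathrm{Bernoulli}(p_i)$, $\lambda=\sum_{i=1}^np_i$, and let $\alpha_1,\dots,\alpha_n$ be i.i.d., independent of the $X_i$, with $\Pr(\alpha_i=1)=\Pr(\alpha_i=2)=1/2$. Let $S_n=\sum_{i=1}^n\alpha_iX_i$. Then $$D\big(P_{S_n}\,\|\,\mathrm{Po}(\lambda/2,\lambda/2)\big)\le\sum_{i=1}^np_i^2.$$
   Context: $\mathrm{Po}(\lambda/2,\lambda/2)$ denotes the compound Poisson distribution of $Z_1+2Z_2$, where $Z_1,Z_2$ are i.i.d. Poisson with mean $\lambda/2$. $D(P\|Q)=\sum_xP(x)\log\frac{P(x)}{Q(x)}$ is relative entropy with natural logarithm. *)

From mathcomp Require Import all_boot all_order all_algebra.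
From mathcomp Require Import all_classical all_reals all_analysis.
Set Implicit Arguments. Unset Strict Implicit. Unset Printing Implicit Defensive.
Import Order.TTheory GRing.Theory Num.Theory.
Local Open Scope ring_scope.

Section Defs.
Variable R : realType.

Definition poisson_pmf (mu : R) (k : nat) : R :=
  expR (- mu) * mu ^+ k / (k`!)%:R.

(* Po(a, b): law of Z1 + 2 Z2 with Z1 ~ Poisson(a), Z2 ~ Poisson(b) independent:
   P(Z1 + 2 Z2 = k) = sum_{j, 2j <= k} P(Z1 = k - 2j) P(Z2 = j). *)
Definition cpo_pmf (a b : R) (k : nat) : R :=
  \sum_(j < k./2.+1) poisson_pmf a (k - 2 * j) * poisson_pmf b j.

(* Sample space for (X_1..X_n, alpha_1..alpha_n): outcome w i = (X_i = 1, alpha_i = 2). *)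
Definition outcome (n : nat) := {ffun 'I_n -> bool * bool}.

Definition joint_weight (n : nat) (p : 'I_n -> R) (w : outcome n) : R :=
  \prod_(i < n) ((if (w i).1 then p i else 1 - p i) * 2^-1).

Definition alpha_val (b : bool) : nat := if b then 2 else 1.
Definition S_val (n : nat) (w : outcome n) : nat :=
  \sum_(i < n) alpha_val (w i).2 * nat_of_bool (w i).1.

Definition law_S (n : nat) (p : 'I_n -> R) (k : nat) : R :=
  \sum_(w : outcome n | S_val w == k) joint_weight p w.

(* Relative entropy D(P||Q) = sum_x P(x) log(P(x)/Q(x)) (natural log,
   convention 0 log 0 = 0) for P supported on {0,...,N-1}. *)
Definition relEnt (N : nat) (P Q : nat -> R) : R :=
  \sum_(k < N) (if P k == 0 then 0 else P k * ln (P k / Q k)).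

End Defs.

From Pilot Require Import Defs.
From mathcomp Require Import all_boot all_order all_algebra.
From mathcomp Require Import all_classical all_reals all_analysis.
From mathcomp Require Import zify ring lra.
Set Implicit Arguments. Unset Strict Implicit. Unset Printing Implicit Defensive.
Import Order.TTheory GRing.Theory Num.Theory.
Local Open Scope ring_scope.

(* S_n is a function of the pairs (X_i, alpha_i), so by the log-sum inequality
   D(P_S || Q) is at most the divergence of the joint law from any nonnegative weight r
   on outcomes whose image under S is dominated by Q = Po(lambda/2, lambda/2).  Take for
   r the product of the weights r_i(x, a) = e^(-p_i) p_i^x / 2: its image under S has
   generating function prod_i e^(-p_i) (1 + (p_i/2)(z + z^2)), which is coefficientwise
   below e^(-lambda) exp((lambda/2)(z + z^2)), the generating function of Q.  Divergence
   from a product weight splits over the coordinates, and coordinate i contributes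
   p_i^2 + (1 - p_i) ln ((1 - p_i) e^(p_i)) <= p_i^2. *)

Lemma sum_partition_nat (V : nmodType) (I : finType) (f : I -> nat) N (F : I -> V) :
  (forall i, (f i < N)%N) -> \sum_(k < N) \sum_(i | f i == k) F i = \sum_i F i.
Proof.
by move=> f_lt; rewrite [RHS](partition_big (fun i => Ordinal (f_lt i)) xpredT).
Qed.

Lemma sum_bool_pair (V : nmodType) (F : bool * bool -> V) :
  \sum_x F x = F (true, true) + F (true, false) + (F (false, true) + F (false, false)).
Proof.
rewrite (eq_bigr (fun x => F (x.1, x.2))) => [|[] //].
by rewrite -(pair_bigA _ (fun b1 b2 => F (b1, b2))) !big_bool.
Qed.

Lemma sum_ffun_prod_marginal (R : comPzSemiRingType) (T : finType) n
    (f : 'I_n -> T -> R) (g : T -> R) i :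
  (forall j, \sum_x f j x = 1) ->
  \sum_(w : {ffun 'I_n -> T}) (\prod_j f j (w j)) * g (w i) = \sum_x f i x * g x.
Proof.
move=> f_sum1; pose F j x := if j == i then f j x * g x else f j x.
transitivity (\sum_(w : {ffun 'I_n -> T}) \prod_j F j (w j)).
  apply: eq_bigr => w _; rewrite (bigD1 i) // [RHS](bigD1 i) //= /F eqxx mulrAC.
  by congr (_ * _); apply: eq_bigr => j /negbTE ->.
rewrite -bigA_distr_bigA (bigD1 i) //= /F eqxx [X in _ * X]big1 ?mulr1 //.
by move=> j /negbTE ->.
Qed.

Section Entropy.
Variable R : realType.

Lemma ln_le_subr1 (x : R) : 0 < x -> ln x <= x - 1.
Proof. by move=> x0; have := @le_ln1Dx R (x - 1); rewrite addrCA subrr addr0; apply; lra. Qed.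

Lemma ln_prod (I : finType) (f : I -> R) : (forall i, 0 < f i) ->
  ln (\prod_i f i) = \sum_i ln (f i).
Proof.
move=> f_gt0; suff [] : 0 < \prod_i f i /\ ln (\prod_i f i) = \sum_i ln (f i) by [].
apply: (big_ind2 (fun x y => 0 < x /\ ln x = y)); first by rewrite ln1.
  by move=> x1 x2 y1 y2 [x1_gt0 <-] [x2_gt0 <-]; rewrite mulr_gt0 // lnM.
by move=> i _; split.
Qed.

Definition llr (x y : R) : R := if x == 0 then 0 else ln (x / y).

Lemma relEnt_llrE N (P Q : nat -> R) :
  relEnt N P Q = \sum_(k < N) P k * llr (P k) (Q k).
Proof. by apply: eq_bigr => k _; rewrite /llr; case: eqP => [->|]; rewrite ?mulr0. Qed.

Lemma llr_prod (I : finType) (a b : I -> R) :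
  (forall i, 0 < a i) -> (forall i, 0 < b i) ->
  llr (\prod_i a i) (\prod_i b i) = \sum_i llr (a i) (b i).
Proof.
move=> a_gt0 b_gt0; rewrite /llr gt_eqF ?prodr_gt0 // -prodfV -big_split /=.
rewrite ln_prod => [|i]; last by rewrite divr_gt0.
by apply: eq_bigr => i _; rewrite gt_eqF.
Qed.

(* Termwise, [a ln (a/b) >= a ln (A/Q) + a - b A/Q] by [ln y <= y - 1]; summing and
   using [sum b <= Q] gives the claim. *)
Lemma log_sum_le (I : finType) (P : pred I) (a b : I -> R) (Q : R) :
  (forall j, P j -> 0 <= a j) -> (forall j, P j -> 0 <= b j) ->
  (forall j, P j -> 0 < a j -> 0 < b j) -> \sum_(j | P j) b j <= Q ->
  (\sum_(j | P j) a j) * llr (\sum_(j | P j) a j) Q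
    <= \sum_(j | P j) a j * llr (a j) (b j).
Proof.
move=> a_ge0 b_ge0 ab_gt0 bQ.
set A := \sum_(j | P j) a j; set B := \sum_(j | P j) b j in bQ.
have [A0|A_neq0] := eqVneq A 0.
  rewrite A0 mul0r big1 // => j Pj.
  by rewrite (psumr_eq0P a_ge0 A0) // mul0r.
have [j0 /andP[Pj0 aj0]] := psumr_neq0P a_ge0 (elimN eqP A_neq0).
have A_gt0 : 0 < A by rewrite lt_neqAle eq_sym A_neq0 sumr_ge0.
have Q_gt0 : 0 < Q.
  apply: lt_le_trans bQ; apply: lt_le_trans (ab_gt0 _ Pj0 aj0) _.
  by rewrite /B (bigD1 j0) //= lerDl sumr_ge0 // => j /andP[/b_ge0].
have termwise j : P j -> a j * ln (A / Q) + a j - b j * A / Q <= a j * llr (a j) (b j).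
  move=> Pj; have [->|aj_neq0] := eqVneq (a j) 0.
    by rewrite !mul0r add0r sub0r oppr_le0 divr_ge0 ?mulr_ge0 ?b_ge0 ?ltW.
  have aj_gt0 : 0 < a j by rewrite lt_neqAle eq_sym aj_neq0 a_ge0.
  have bj_gt0 := ab_gt0 j Pj aj_gt0.
  set y := b j * A / (a j * Q).
  have y_gt0 : 0 < y by rewrite divr_gt0 ?mulr_gt0.
  have -> : ln (A / Q) = ln (a j / b j) + ln y.
    rewrite -lnM ?posrE ?y_gt0 ?divr_gt0 //; f_equal.
    by rewrite /y; field; rewrite !gt_eqF.
  have : a j * ln y <= b j * A / Q - a j.
    rewrite (_ : b j * A / Q = a j * y); last by rewrite /y; field; rewrite !gt_eqF.
    by rewrite -[X in _ - X]mulr1 -mulrBr ler_pM2l // ln_le_subr1.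
  rewrite /llr gt_eqF // mulrDr; lra.
apply: le_trans (ler_sum _ termwise).
rewrite !big_split /= sumrN -!mulr_suml -/A -/B.
have : B * A / Q <= A by rewrite ler_pdivrMr // mulrC ler_pM2l.
rewrite /llr gt_eqF //; lra.
Qed.

End Entropy.

Section CompoundPoisson.
Variable R : realType.

Lemma expr_addr_ge_linear (a q : R) m : 0 <= a -> 0 <= q ->
  a ^+ m + q * m%:R * a ^+ m.-1 <= (a + q) ^+ m.
Proof.
move=> a_ge0 q_ge0; case: m => [|m]; first by rewrite mulr0 mul0r addr0.
have -> : q * m.+1%:R * a ^+ m.+1.-1 = a ^+ m * q *+ m.+1 by rewrite -mulr_natr /=; ring.
rewrite exprDn 2!big_ord_recl /= subn0 bin0 bin1 subn1 /= expr0 expr1 mulr1 mulr1n.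
by rewrite addrA lerDl sumr_ge0 // => i _; rewrite mulrn_wge0 // mulr_ge0 ?exprn_ge0.
Qed.

(* [cpo_term a k j = e^(2a) P(Z1 = k - 2j) P(Z2 = j)] for [Z1, Z2 ~ Poisson(a)]. *)
Definition cpo_term (a : R) (k j : nat) : R :=
  if (2 * j <= k)%N then a ^+ (k - j) / ((k - 2 * j)`!%:R * j`!%:R) else 0.

Definition cpo_series (a : R) (k : nat) : R := \sum_(j < k.+1) cpo_term a k j.

Lemma cpo_term_ge0 (a : R) k j : 0 <= a -> 0 <= cpo_term a k j.
Proof. by move=> a_ge0; rewrite /cpo_term; case: ifP => // _; rewrite divr_ge0 ?exprn_ge0. Qed.

Lemma cpo_series_widen (a : R) N k : (k < N)%N -> \sum_(j < N) cpo_term a k j = cpo_series a k.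
Proof.
move=> kN; rewrite /cpo_series (big_ord_widen N (cpo_term a k) kN) [RHS]big_mkcond /=.
by apply: eq_bigr => j _; case: ifP => // jk; rewrite /cpo_term ifF //; apply/negbTE; lia.
Qed.

Lemma cpo_pmf_diag (a : R) k : cpo_pmf a a k = expR (- (a + a)) * cpo_series a k.
Proof.
rewrite /cpo_pmf /cpo_series mulr_sumr (big_ord_widen k.+1
  (fun j => Defs.poisson_pmf a (k - 2 * j)%N * Defs.poisson_pmf a j)); last by rewrite ltnS; lia.
rewrite big_mkcond /=; apply: eq_bigr => j _; rewrite /cpo_term ltnS geq_half_double -mul2n.
case: ifP => jk; last by rewrite mulr0.
have -> : (k - j = k - 2 * j + j)%N by lia.
rewrite /Defs.poisson_pmf opprD expRD exprD; field.
by rewrite !pnatr_eq0 -!lt0n !fact_gt0.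
Qed.

Lemma cpo_term_diag (a : R) d j :
  cpo_term a (d + 2 * j) j = a ^+ (d + j) / (d`!%:R * j`!%:R).
Proof. by rewrite /cpo_term ifT; [congr (_ ^+ _ / (_`!%:R * _)) |]; lia. Qed.

Lemma cpo_term_shift1 (a : R) d j :
  (if (d + 2 * j < 1)%N then 0 else cpo_term a (d + 2 * j - 1) j)
    = d%:R * a ^+ (d + j).-1 / (d`!%:R * j`!%:R).
Proof.
case: d => [|d].
  by rewrite !mul0r; case: ifP => // /negbT k_ge1; rewrite /cpo_term ifF //; apply/negbTE; lia.
have -> : (d.+1 + 2 * j < 1)%N = false by lia.
have -> : (d.+1 + 2 * j - 1 = d + 2 * j)%N by lia.
rewrite cpo_term_diag factS natrM addSn /=; field.
by rewrite nat1r !pnatr_eq0 -!lt0n !fact_gt0.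
Qed.

Lemma cpo_term_shift2 (a : R) d j :
  (if (d + 2 * j < 2)%N then 0 else if j == 0%N then 0 else cpo_term a (d + 2 * j - 2) j.-1)
    = j%:R * a ^+ (d + j).-1 / (d`!%:R * j`!%:R).
Proof.
case: j => [|j]; first by rewrite !mul0r; case: ifP.
have -> : (d + 2 * j.+1 < 2)%N = false by lia.
have -> : (d + 2 * j.+1 - 2 = d + 2 * j)%N by lia.
rewrite cpo_term_diag factS natrM addnS /=; field.
by rewrite nat1r !pnatr_eq0 -!lt0n !fact_gt0.
Qed.

(* Writing [k = d + 2j], all three terms on the left are multiples of [1/(d! j!)], and the
   inequality reduces to [a^m + q m a^(m-1) <= (a+q)^m] with [m = d + j]. *)
Lemma cpo_term_step_le (a q : R) k j : 0 <= a -> 0 <= q ->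
  cpo_term a k j + q * (if (k < 1)%N then 0 else cpo_term a (k - 1) j)
    + q * (if (k < 2)%N then 0 else if j == 0%N then 0 else cpo_term a (k - 2) j.-1)
  <= cpo_term (a + q) k j.
Proof.
move=> a_ge0 q_ge0; have [jk|kj] := leqP (2 * j) k; last first.
  rewrite /cpo_term; repeat case: ifPn => ?; by [lia | rewrite ?mulr0 ?addr0].
have [d ->] : exists d, k = (d + 2 * j)%N by exists (k - 2 * j)%N; lia.
rewrite cpo_term_shift1 cpo_term_shift2 !cpo_term_diag.
set F : R := d`!%:R * j`!%:R.
have F_gt0 : 0 < F by rewrite mulr_gt0 // ltr0n fact_gt0.
have -> : a ^+ (d + j) / F + q * (d%:R * a ^+ (d + j).-1 / F) + q * (j%:R * a ^+ (d + j).-1 / F)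
    = (a ^+ (d + j) + q * (d + j)%:R * a ^+ (d + j).-1) / F by rewrite natrD; ring.
by rewrite ler_pM2r ?invr_gt0 // expr_addr_ge_linear.
Qed.

Lemma cpo_series_step_le (a q : R) k : 0 <= a -> 0 <= q ->
  cpo_series a k + q * (if (k < 1)%N then 0 else cpo_series a (k - 1))
    + q * (if (k < 2)%N then 0 else cpo_series a (k - 2))
  <= cpo_series (a + q) k.
Proof.
move=> a_ge0 q_ge0.
have -> : (if (k < 1)%N then 0 else cpo_series a (k - 1))
    = \sum_(j < k.+1) (if (k < 1)%N then 0 else cpo_term a (k - 1) j).
  by case: ifPn => k_ge1; [rewrite big1 | rewrite cpo_series_widen //; lia].
have -> : (if (k < 2)%N then 0 else cpo_series a (k - 2))
    = \sum_(j < k.+1) (if (k < 2)%N then 0 else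
                        if j == 0%N :> nat then 0 else cpo_term a (k - 2) j.-1).
  case: ifPn => k_ge2; first by rewrite big1.
  by rewrite big_ord_recl add0r -(@cpo_series_widen _ k) //; lia.
rewrite /cpo_series !mulr_sumr -!big_split /=.
by apply: ler_sum => j _; apply: cpo_term_step_le.
Qed.

Definition step_poly (q : R) : {poly R} := 1 + q%:P * 'X^1 + q%:P * 'X^2.

Lemma coef_mul_step_poly (P : {poly R}) q k : (P * step_poly q)`_k =
  P`_k + q * (if (k < 1)%N then 0 else P`_(k - 1))
    + q * (if (k < 2)%N then 0 else P`_(k - 2)).
Proof. by rewrite /step_poly !mulrDr mulr1 !coefD mulrCA coefCM coefMXn mulrCA coefCM coefMXn. Qed.

(* The generating function of [cpo_series a] is [exp (a (X + X^2))], which dominates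
   [prod_i (1 + q_i (X + X^2))] coefficientwise. *)
Lemma coef_prod_step_poly_le (I : Type) (r : seq I) (q : I -> R) k :
  (forall i, 0 <= q i) ->
  (\prod_(i <- r) step_poly (q i))`_k <= cpo_series (\sum_(i <- r) q i) k.
Proof.
move=> q_ge0; elim: r k => [|x r IHr] k.
  rewrite !big_nil coef1; case: k => [|k].
    by rewrite /cpo_series big_ord1 /cpo_term /= expr0 mul1r mulr1 invr1.
  by rewrite sumr_ge0 // => j _; apply: cpo_term_ge0.
rewrite !big_cons mulrC coef_mul_step_poly [q x + _]addrC.
have sum_ge0 : 0 <= \sum_(i <- r) q i by apply: sumr_ge0.
apply: le_trans (cpo_series_step_le k sum_ge0 (q_ge0 x)).
apply: lerD; [apply: lerD; first exact: IHr|]; by rewrite ler_wpM2l //; case: ifP.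
Qed.

End CompoundPoisson.

Lemma S_val_lt n (w : outcome n) : (S_val w < (2 * n).+1)%N.
Proof.
have S_coord_le2 i : (alpha_val (w i).2 * (w i).1 <= 2)%N by case: (w i) => [[] []].
rewrite ltnS (leq_trans (leq_sum _ (fun i _ => S_coord_le2 i))) //.
by rewrite sum_nat_const card_ord mulnC.
Qed.

Section Model.
Variables (R : realType) (n : nat) (p : 'I_n -> R).
Hypothesis p01 : forall i, 0 <= p i <= 1.

Definition law_coord i (x : bool * bool) : R := (if x.1 then p i else 1 - p i) / 2.
Definition ref_coord i (x : bool * bool) : R := expR (- p i) * ((if x.1 then p i else 1) / 2).
Definition ref_weight (w : outcome n) : R := \prod_i ref_coord i (w i).
Definition S_coord (x : bool * bool) : nat := (alpha_val x.2 * x.1)%N.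

Lemma law_coord_ge0 i x : 0 <= law_coord i x.
Proof.
have /andP[p_ge0 p_le1] := p01 i.
by rewrite /law_coord divr_ge0 //; case: ifP; rewrite // subr_ge0.
Qed.

Lemma ref_coord_ge0 i x : 0 <= ref_coord i x.
Proof.
have /andP[p_ge0 _] := p01 i.
by rewrite /ref_coord mulr_ge0 ?expR_ge0 ?divr_ge0 //; case: ifP.
Qed.

Lemma ref_coord_gt0 i x : 0 < law_coord i x -> 0 < ref_coord i x.
Proof.
rewrite /law_coord /ref_coord pmulr_lgt0 ?invr_gt0 // => law_gt0.
by rewrite mulr_gt0 ?expR_gt0 ?divr_gt0 //; case: ifP law_gt0.
Qed.

Lemma law_coord_sum1 i : \sum_x law_coord i x = 1.
Proof. by rewrite sum_bool_pair /law_coord /=; lra. Qed.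

Lemma sum_S_val_prod_coef (f : 'I_n -> bool * bool -> R) k :
  \sum_(w : outcome n | S_val w == k) \prod_i f i (w i)
    = (\prod_i \sum_x (f i x)%:P * 'X^(S_coord x))`_k.
Proof.
rewrite bigA_distr_bigA /= coef_sum big_mkcond /=; apply: eq_bigr => w _.
rewrite big_split /= -rmorph_prod prodrXr coefCM coefXn eq_sym.
by case: eqP => _; rewrite ?mulr1 ?mulr0.
Qed.

Lemma ref_coord_gen i :
  \sum_x (ref_coord i x)%:P * 'X^(S_coord x) = (expR (- p i))%:P * step_poly (p i / 2).
Proof.
rewrite sum_bool_pair /ref_coord /S_coord /step_poly /=.
have half : (2^-1 : R)%:P + 2^-1%:P = 1 by rewrite -polyCD -polyC1; congr (_%:P); field.
rewrite -half !polyCM; ring.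
Qed.

Lemma ref_pushforward_le_cpo k :
  \sum_(w : outcome n | S_val w == k) ref_weight w
    <= cpo_pmf ((\sum_i p i) / 2) ((\sum_i p i) / 2) k.
Proof.
rewrite sum_S_val_prod_coef; under eq_bigr do rewrite ref_coord_gen.
rewrite big_split /= -rmorph_prod coefCM -expR_sum sumrN cpo_pmf_diag -splitr.
rewrite ler_wpM2l ?expR_ge0 // mulr_suml coef_prod_step_poly_le // => i.
by have /andP[p_ge0 _] := p01 i; rewrite divr_ge0.
Qed.

Lemma law_S_llr_le k :
  law_S p k * llr (law_S p k) (cpo_pmf ((\sum_i p i) / 2) ((\sum_i p i) / 2) k)
    <= \sum_(w : outcome n | S_val w == k) joint_weight p w * llr (joint_weight p w) (ref_weight w).
Proof.
apply: log_sum_le (ref_pushforward_le_cpo k) => w _.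
- by apply: prodr_ge0 => i _; apply: law_coord_ge0.
- by apply: prodr_ge0 => i _; apply: ref_coord_ge0.
move=> /lt0r_neq0 /prodf_neq0 law_neq0; apply: prodr_gt0 => i _.
by apply: ref_coord_gt0; rewrite lt0r law_coord_ge0 andbT; apply: law_neq0.
Qed.

Lemma joint_llr_chain (w : outcome n) :
  joint_weight p w * llr (joint_weight p w) (ref_weight w)
    = (\prod_i law_coord i (w i)) * \sum_i llr (law_coord i (w i)) (ref_coord i (w i)).
Proof.
change (\prod_i law_coord i (w i)) with (joint_weight p w).
have [->|/prodf_neq0 law_neq0] := eqVneq (joint_weight p w) 0; first by rewrite !mul0r.
have law_gt0 i : 0 < law_coord i (w i) by rewrite lt0r law_coord_ge0 andbT; apply: law_neq0.
by rewrite /ref_weight llr_prod // => i; apply: ref_coord_gt0.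
Qed.

Lemma coord_divergence_le i :
  \sum_x law_coord i x * llr (law_coord i x) (ref_coord i x) <= p i ^+ 2.
Proof.
have /andP[p_ge0 p_le1] := p01 i.
rewrite sum_bool_pair /law_coord /ref_coord /llr /=.
have -> : p i / 2 * (if p i / 2 == 0 then 0 else ln (p i / 2 / (expR (- p i) * (p i / 2))))
    = p i / 2 * p i.
  have [->|p_neq0] := eqVneq (p i) 0; first by rewrite !(mul0r, mulr0).
  have -> : p i / 2 / (expR (- p i) * (p i / 2)) = expR (p i).
    by rewrite expRN; field; rewrite p_neq0 gt_eqF ?expR_gt0.
  by rewrite expRK mulf_eq0 (negbTE p_neq0) invr_eq0 pnatr_eq0.
have failure_le0 : (1 - p i) / 2 * (if (1 - p i) / 2 == 0 then 0
    else ln ((1 - p i) / 2 / (expR (- p i) * (1 / 2)))) <= 0.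
  case: eqP => _; first by rewrite mulr0.
  rewrite mulr_ge0_le0 ?divr_ge0 ?subr_ge0 // ln_le0 // ler_pdivrMr ?mulr_gt0 ?expR_gt0 //.
  by have := expR_ge1Dx (- p i); lra.
set T0 := (1 - p i) / 2 * _ in failure_le0 *.
rewrite expr2; lra.
Qed.

End Model.

Theorem mainTheorem14 (R : realType) (n : nat) (p : 'I_n -> R)
  (hp : forall i, 0 <= p i <= 1) :
  let lambda := \sum_(i < n) p i in
  relEnt (2 * n).+1 (law_S p) (cpo_pmf (lambda / 2) (lambda / 2))
    <= \sum_(i < n) p i ^+ 2.
Proof.
rewrite /= relEnt_llrE.
apply: le_trans; first by apply: ler_sum => k _; apply: law_S_llr_le.
rewrite sum_partition_nat; last exact: S_val_lt.
rewrite (eq_bigr _ (fun w _ => joint_llr_chain hp w)).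
under eq_bigr do rewrite mulr_sumr.
rewrite exchange_big /=; apply: ler_sum => i _.
rewrite (sum_ffun_prod_marginal (f := law_coord p)
  (fun x => llr (law_coord p i x) (ref_coord p i x))) ?coord_divergence_le //.
exact: law_coord_sum1.
Qed.
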